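(* Let $\ell$ be a fixed positive integer. For every positive integer $k$, every finite graph $G$ and every set $A\subseteq V(G)$, the graph $G$ either contains $k$ pairwise vertex-disjoint long $A$-paths, or there is a vertex set $X\subseteq V(G)$ with $|X|\leq 4k\ell$ that meets every long $A$-path in $G$.
   Context: For a vertex set $A$, an $A$-path is a path with at least one edge whose two endvertices lie in $A$ and none of whose interior vertices lie in $A$. The length of a path is its number of edges. A path is long if its length is at least $\ell$. *)

From mathcomp Require Import all_boot.
Set Implicit Arguments. Unset Strict Implicit. Unset Printing Implicit Defensive.

(* A finite simple graph on the finType T is given by an adjacency relation
   e : rel T, assumed symmetric and irreflexive in the theorem. *)

Definition A_path (T : finType) (e : rel T) (A : {set T}) (p : seq T) : bool :=
  match p with
  | [::] => false
  | x :: q =>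
      [&& 0 < size q, path e x q, uniq (x :: q), x \in A, last x q \in A
        & all (fun v => v \notin A) (behead (belast x q))]
  end.

Definition path_length (T : Type) (p : seq T) : nat := (size p).-1.

Definition long_A_path (T : finType) (e : rel T) (A : {set T}) (l : nat)
    (p : seq T) : bool :=
  A_path e A p && (l <= path_length p).

Definition vdisjoint (T : eqType) (p q : seq T) : bool :=
  ~~ has (fun v => v \in q) p.

From mathcomp Require Import all_boot zify.
From Stdlib Require Import Classical.
Set Implicit Arguments. Unset Strict Implicit. Unset Printing Implicit Defensive.

(* Given fewer than k disjoint long A-paths, either one more can be added or a
   small set X meets every long A-path; iterating from the empty family gives
   the theorem.  For a path P of the family F, call its first and last l
   vertices its ends and the other vertices its middle.  If two disjoint walks
   from A - V(F), with interior outside A and V(F), reach the middle of P at v1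
   before v2, then P can be replaced by two long A-paths: the first walk
   continued backwards along P from v1 and the second continued forwards from
   v2.  Otherwise Menger's theorem for two paths (proved by induction on the
   interior, contracting an edge leaving the sources) gives one vertex meeting
   all such walks.  Let X consist of the ends of all P and these vertices, so
   |X| <= (2l+1)(k-1) <= 4kl.  A long A-path Q avoiding X avoids V(F): the first
   vertex of Q on some P is not in A, since the A-vertices of P are ends, so it
   is in the middle of P and the part of Q before it is one of these walks. *)

Lemma vdisjointP (T : eqType) (p q : seq T) :
  reflect (forall x, x \in p -> x \notin q) (vdisjoint p q).
Proof. exact: hasPn. Qed.

Lemma vdisjointC (T : eqType) (p q : seq T) : vdisjoint p q = vdisjoint q p.
Proof. by apply/vdisjointP/vdisjointP => pq x xq; apply: contraTN xq; apply: pq. Qed.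

Lemma split_first (T : Type) (a : pred T) s :
  has a s -> exists s1 y s2, [/\ s = s1 ++ y :: s2, a y & ~~ has a s1].
Proof. by move=> /split_find [y s1 s2 ay ns1]; exists s1, y, s2; rewrite cat_rcons. Qed.

Lemma split_last (T : eqType) (x : T) s :
  x \in s -> exists s1 s2, s = s1 ++ x :: s2 /\ x \notin s2.
Proof.
rewrite -mem_rev -has_pred1 => /split_first [s1 [y [s2 [Es /eqP yx ns1]]]].
exists (rev s2), (rev s1); rewrite -[s]revK Es rev_cat rev_cons cat_rcons yx.
by rewrite mem_rev -has_pred1.
Qed.

Lemma disjoint_setP (T : finType) (A B : {set T}) :
  reflect (forall x, x \in A -> x \notin B) [disjoint A & B].
Proof. by rewrite disjoints_subset; apply: (iffP subsetP) => AB x /AB; rewrite inE. Qed.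

Lemma vdisjoint_catl (T : eqType) (p1 p2 q : seq T) :
  vdisjoint (p1 ++ p2) q = vdisjoint p1 q && vdisjoint p2 q.
Proof. by rewrite /vdisjoint has_cat negb_or. Qed.

Lemma path_splice (T : Type) (e : rel T) a u x u' b v v' :
  path e a (u ++ x :: u') -> path e b (v ++ x :: v') -> path e a (u ++ x :: v').
Proof. by rewrite !cat_path => /andP [-> /= /andP [-> _]] /andP [_ /= /andP [_ ->]]. Qed.

Lemma vdisjoint_catr (T : eqType) (p q1 q2 : seq T) :
  vdisjoint p (q1 ++ q2) = vdisjoint p q1 && vdisjoint p q2.
Proof. by rewrite vdisjointC vdisjoint_catl !(vdisjointC _ p). Qed.

Lemma vdisjoint_sub (T : eqType) (p p' q q' : seq T) :
  {subset p' <= p} -> {subset q' <= q} -> vdisjoint p q -> vdisjoint p' q'.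
Proof. by move=> pp' qq' /vdisjointP pq; apply/vdisjointP => x /pp' /pq; apply: contra => /qq'. Qed.

Lemma uniq_vdisjoint (T : eqType) (p q : seq T) : uniq (p ++ q) -> vdisjoint p q.
Proof. by rewrite cat_uniq vdisjointC => /and3P []. Qed.

Lemma split_two (T : eqType) (x y : T) s : x != y -> x \in s -> y \in s ->
  exists s1 s2 s3, s = s1 ++ x :: s2 ++ y :: s3 \/ s = s1 ++ y :: s2 ++ x :: s3.
Proof.
move=> xy /splitPr [s1 s2]; rewrite mem_cat inE eq_sym (negbTE xy) /=.
case/orP => /splitPr [t1 t2]; last by exists s1, t1, t2; left.
by exists t1, t2, s2; right; rewrite -catA.
Qed.

Lemma union_witnesses (T : finType) (I : eqType) (r : seq I)
    (Pr : I -> {set T} -> Prop) (c : nat) (Z : Prop) :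
  (forall i (Y Y' : {set T}), Y \subset Y' -> Pr i Y -> Pr i Y') ->
  (forall i, i \in r -> Z \/ exists2 Y : {set T}, #|Y| <= c & Pr i Y) ->
  Z \/ exists2 X : {set T}, #|X| <= c * size r & forall i, i \in r -> Pr i X.
Proof.
move=> mono; elim: r => [|i r IH] wit; first by right; exists set0; rewrite ?cards0.
have [z|[Y cardY PY]] := wit i (mem_head i r); first by left.
have [z|[X cardX PX]] : Z \/ _ := IH (fun j jr => wit j (mem_behead (jr : j \in behead (i :: r)))).
  by left.
right; exists (Y :|: X); first by rewrite mulnS (leq_trans (leq_card_setU Y X).1) // leq_add.
move=> j; rewrite inE => /predU1P [->|jr]; first exact: mono (subsetUl Y X) PY.
exact: mono (subsetUr Y X) (PX j jr).
Qed.

(** * Menger's theorem for two links *)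
Section TwoLinks.
Variable T : finType.
Implicit Types (e : rel T) (S W M X : {set T}) (p q : seq T).

(* Links are walks: their vertices may repeat. *)
Definition link e S W M p : Prop :=
  exists s mid m, p = s :: rcons mid m /\
    [/\ s \in S, m \in M, all (fun x => x \in W) mid & path e s (rcons mid m)].

Definition two_links_or_cut e S W M : Prop :=
  (exists p q, [/\ link e S W M p, link e S W M q & vdisjoint p q]) \/
  (exists X, #|X| <= 1 /\ forall p, link e S W M p -> has (fun v => v \in X) p).

Lemma link_sub e e' S S' W W' M M' p :
  subrel e e' -> S \subset S' -> W \subset W' -> M \subset M' ->
  link e S W M p -> link e' S' W' M' p.
Proof.
move=> ee' /subsetP SS' /subsetP WW' /subsetP MM' [s [mid [m [-> [sS mM midW pth]]]]].
exists s, mid, m; split => //; split; [exact: SS' | exact: MM' | | exact: sub_path pth].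
by apply/allP => x /(allP midW) /WW'.
Qed.

Lemma link_cons e S W M p :
  link e S W M p -> exists s q, [/\ p = s :: q, s \in S & {subset q <= W :|: M}].
Proof.
case=> s [mid [m [-> [sS mM midW _]]]]; exists s, (rcons mid m); split => // x.
by rewrite mem_rcons in_setU => /predU1P [->|/(allP midW) ->]; rewrite ?mM ?orbT.
Qed.

Lemma link_shorten e S W M p : [disjoint S & M] -> link e S W M p ->
  exists s mid m,
    [/\ s \in S, m \in M, all (fun x => x \in W) mid, path e s (rcons mid m)
       & uniq (s :: rcons mid m)] /\ {subset s :: rcons mid m <= p}.
Proof.
move=> dSM [s [mid [m [-> [sS mM midW pth]]]]].
have [p' [pth' up' sub' Elast]] : exists p', [/\ path e s p', uniq (s :: p'),
    {subset p' <= rcons mid m} & last s p' = last s (rcons mid m)].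
  by case: (shortenP pth) => p' *; exists p'.
rewrite last_rcons in Elast.
case/lastP: p' pth' up' sub' Elast => [_ _ _ /= sm|mid' m' pth' up' sub'].
  by rewrite -sm (disjointFr dSM sS) in mM.
rewrite last_rcons => Em'; subst m'.
have sub_mid : {subset mid' <= mid}.
  move=> x xmid'; have := sub' x; rewrite !mem_rcons !inE xmid' orbT => /(_ isT).
  by case/predU1P => [xm|//]; move: up'; rewrite /= rcons_uniq -xm xmid' andbF.
exists s, mid', m; split; first by split => //; apply/allP => x /sub_mid /(allP midW).
by move=> x; rewrite !inE !mem_rcons !inE => /or3P [->|->|/sub_mid ->]; rewrite ?orbT.
Qed.

Lemma cut_vertex_or_avoiding e S W M x :
  two_links_or_cut e S W M \/ exists2 p, link e S W M p & x \notin p.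
Proof.
have [avoid|none] := classic (exists2 p, link e S W M p & x \notin p); first by right.
left; right; exists [set x]; rewrite cards1; split => // p lp.
apply/hasP; exists x; rewrite ?inE //; apply/negPn/negP => xp; by apply: none; exists p.
Qed.

Lemma link_avoid_or_after e S W M w p : w \in W -> link e S W M p ->
  link e S (W :\ w) M p \/
  exists2 q, link e [set w] (W :\ w) M (w :: q) & {subset w :: q <= p}.
Proof.
move=> wW [s [mid [m [-> [sS mM midW pth]]]]].
have [wmid|nwmid] := boolP (w \in mid); last first.
  left; exists s, mid, m; split => //; split => //; apply/allP => x xmid.
  by rewrite in_setD1 (allP midW _ xmid) andbT; apply: contraNneq nwmid => <-.
have [mid1 [mid2 [Emid nw2]]] := split_last wmid; right; exists (rcons mid2 m).
  exists w, mid2, m; split => //; split; rewrite ?inE //.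
    apply/allP => x xmid2; rewrite in_setD1 (allP midW) ?Emid ?mem_cat ?inE ?xmid2 ?orbT //.
    by rewrite andbT; apply: contraNneq nw2 => <-.
  by move: pth; rewrite Emid rcons_cat cat_path => /andP [_ /= /andP [_ ->]].
move=> x; rewrite Emid !(inE, mem_rcons, mem_cat) => /or3P [] ->; by rewrite !orbT.
Qed.

Lemma link_notin e S W M p x :
  x \notin S -> x \notin W -> x \notin M -> link e S W M p -> x \notin p.
Proof.
move=> xS xW xM /link_cons [s [q [-> sS qWM]]]; rewrite inE negb_or.
by rewrite (contraNneq _ xS) => [|->] //=; apply: contra (qWM x) _; rewrite in_setU negb_or xW.
Qed.

Lemma link_restrict_head e S S' W M r t :
  link e S W M (r :: t) -> r \in S' -> link e S' W M (r :: t).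
Proof. by case=> s [mid [m [[-> ->] [_ mM midW pth]]]] sS'; exists s, mid, m. Qed.

Lemma links_from_pair e W M s w p q :
  link e [set s; w] W M p -> link e [set s; w] W M q -> vdisjoint p q ->
  (link e [set s] W M p /\ link e [set w] W M q) \/
  (link e [set s] W M q /\ link e [set w] W M p).
Proof.
move=> lp lq /vdisjointP pq.
have [r1 [t1 [Ep r1sw _]]] := link_cons lp; have [r2 [t2 [Eq r2sw _]]] := link_cons lq.
have r12 : r1 != r2 by apply: contraTneq (pq r1 _) => [->|]; rewrite ?Eq ?Ep mem_head.
move: lp lq r12; rewrite Ep Eq.
case/set2P: r1sw => ->; case/set2P: r2sw => -> //; rewrite ?eqxx // => lp lq _.
  by left; split; [exact: link_restrict_head lp (set11 s) | exact: link_restrict_head lq (set11 w)].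
by right; split; [exact: link_restrict_head lq (set11 s) | exact: link_restrict_head lp (set11 w)].
Qed.

Section Disjoint.
Variables (S W M : {set T}).
Hypotheses (dSW : [disjoint S & W]) (dSM : [disjoint S & M]) (dWM : [disjoint W & M]).

Lemma link_head_S e p x : link e S W M p -> x \in p -> x \in S -> head x p = x.
Proof.
case/link_cons => s [q [-> _ qWM]]; rewrite inE => /predU1P [-> //|/qWM].
by rewrite in_setU => /orP [] + xS; rewrite ?(disjointFr dSW xS) ?(disjointFr dSM xS).
Qed.

Lemma link_edge e p : (forall s w, s \in S -> w \in W -> ~~ e s w) -> link e S W M p ->
  exists s m, [/\ p = [:: s; m], s \in S & m \in M].
Proof.
move=> noSW [s [[|w mid] [m [-> [sS mM /= midW pth]]]]]; first by exists s, m.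
by case/andP: midW => wW _; case/andP: pth => esw _; case/negP: (noSW s w sS wW).
Qed.

Lemma vdisjoint_edges s m s' m' : s \in S -> m \in M -> s' \in S -> m' \in M ->
  s != s' -> m != m' -> vdisjoint [:: s; m] [:: s'; m'].
Proof.
move=> sS mM s'S m'M ss' mm'.
have neqSM x y : x \in S -> y \in M -> x != y.
  by move=> xS yM; apply: contraTneq yM => <-; rewrite (disjointFr dSM xS).
apply/vdisjointP => x; rewrite !inE => /orP [] /eqP ->; rewrite negb_or.
  by rewrite ss' neqSM.
by rewrite mm' eq_sym neqSM.
Qed.

Lemma two_links_or_cut_direct e :
  (forall s w, s \in S -> w \in W -> ~~ e s w) -> two_links_or_cut e S W M.
Proof.
move=> noSW; have edge := link_edge noSW.
have [[p1 l1]|nolink] := classic (exists p, link e S W M p); last first.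
  by right; exists set0; rewrite cards0; split => // p lp; case: nolink; exists p.
have [s1 [m1 [E1 s1S m1M]]] := edge _ l1.
have [?|[p2 l2 s1p2]] := cut_vertex_or_avoiding e S W M s1; first done.
have [s2 [m2 [E2 s2S m2M]]] := edge _ l2.
have s12 : s1 != s2 by move: s1p2; rewrite E2 !inE negb_or => /andP [].
have [em12|m12] := eqVneq m1 m2; last first.
  by left; exists p1, p2; split; rewrite // E1 E2 vdisjoint_edges.
have [?|[p3 l3 m1p3]] := cut_vertex_or_avoiding e S W M m1; first done.
have [s3 [m3 [E3 s3S m3M]]] := edge _ l3.
have m31 : m3 != m1 by move: m1p3; rewrite E3 !inE negb_or => /andP [_]; rewrite eq_sym.
have [es13|s31] := eqVneq s1 s3.
  by left; exists p3, p2; split; rewrite // E3 E2 vdisjoint_edges // -?es13 -?em12.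
by left; exists p3, p1; split; rewrite // E3 E1 vdisjoint_edges // eq_sym.
Qed.

Section Reroute.
Variables (e : rel T) (s w : T).
Hypotheses (sS : s \in S) (wW : w \in W).
Local Notation W' := (W :\ w).
Hypothesis s_on_links : forall p, link e S W' M p -> s \in p.

Lemma link_prefix_to_w R : link e S W M R -> s \notin R ->
  exists r mid, [/\ r \in S, s \notin r :: mid, all (fun x => x \in W') mid
                  & path e r (rcons mid w)].
Proof.
move=> [r [mid [m [ER [rS mM midW pth]]]]] sR.
have [/split_first [mid1 [y [mid2 [Emid /eqP Ey nw1]]]]|nw] := boolP (has (pred1 w) mid).
  exists r, mid1; split => //.
  - by apply: contra sR; rewrite ER Emid !(inE, mem_rcons, mem_cat) => /orP [->|->]; rewrite ?orbT.
  - apply/allP => x x1; rewrite in_setD1 (allP midW) ?Emid ?mem_cat ?x1 // andbT.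
    by apply: contraNneq nw1 => <-; apply/hasP; exists x => /=.
  - rewrite rcons_path; move: pth.
    by rewrite Emid Ey rcons_cat cat_path => /andP [-> /= /andP [-> _]].
case/negP: sR; rewrite ER s_on_links //; exists r, mid, m; split => //; split => //.
apply/allP => x xmid; rewrite in_setD1 (allP midW) // andbT.
by apply: contraNneq nw => <-; apply/hasP; exists x => /=.
Qed.

(* A common vertex would let the prefix reach [M] along the [s]-link, giving a
   link that avoids [s] and [w]. *)
Lemma prefix_vdisjoint_link r mid ps :
  r \in S -> s \notin r :: mid -> all (fun x => x \in W') mid -> path e r (rcons mid w) ->
  link e [set s] W' M ps -> vdisjoint (r :: mid) ps.
Proof.
move=> rS smid midW pth [s0 [mida [ma [-> [/set1P -> maM midaW pa]]]]].
have W'W x : x \in W' -> x \in W by rewrite in_setD1 => /andP [].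
have sW' : s \notin W' by rewrite in_setD1 (disjointFr dSW sS) andbF.
apply/vdisjointP => x xr; rewrite inE mem_rcons !inE.
have xSW : (x \in S) || (x \in W).
  by move: xr; rewrite inE => /predU1P [->|/(allP midW) /W'W ->]; rewrite ?rS ?orbT.
have xma : x != ma.
  by apply: contraTneq maM => <-; case/orP: xSW => [/(disjointFr dSM) | /(disjointFr dWM)] ->.
have xs : x != s by apply: contraNneq smid => <-.
rewrite (negbTE xs) (negbTE xma) /=.
apply/negP => xa; move: xr; rewrite inE => /predU1P [xr|xmid].
  by move: (allP midaW x xa); rewrite xr => /W'W; rewrite (disjointFr dSW rS).
case/splitPr: xmid pth midW smid => u1 u2 pth midW smid.
case/splitPr: xa pa midaW => x1 x2 pa midaW.
have : s \in r :: rcons (u1 ++ x :: x2) ma.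
  apply: s_on_links; exists r, (u1 ++ x :: x2), ma; split => //; split => //.
    by move: midW midaW; rewrite !all_cat /= => /andP [-> /andP [-> _]] /andP [_ /andP [_ ->]].
  by move: pth pa; rewrite !rcons_cat !rcons_cons; apply: path_splice.
have sx2 : s \notin x2.
  by apply: contra sW' => sx2; apply: (allP midaW); rewrite mem_cat inE sx2 !orbT.
have sma : s != ma by apply: contraTneq maM => <-; rewrite (disjointFr dSM sS).
move: smid; rewrite !(inE, mem_rcons, mem_cat) (negbTE sx2) (negbTE sma).
by case: (s == r); case: (s \in u1); case: (s == x).
Qed.

Lemma reroute_links R ps pw : link e S W M R -> s \notin R ->
  link e [set s] W' M ps -> link e [set w] W' M pw -> vdisjoint ps pw ->
  exists p q, [/\ link e S W M p, link e S W M q & vdisjoint p q].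
Proof.
move=> lR sR lps lpw dps.
have [r [mid [rS smid midW pth]]] := link_prefix_to_w lR sR.
have W'W := subsetP (subD1set W w).
case: lpw dps => w0 [midb [mb [-> [/set1P -> mbM midbW pb]]]] dps.
exists ps, ((r :: mid) ++ w :: rcons midb mb); split.
- by apply: link_sub lps; rewrite ?sub1set ?subD1set.
- exists r, (mid ++ w :: midb), mb; split; first by rewrite /= rcons_cat.
  split => //; last by rewrite rcons_cat -cat_rcons cat_path last_rcons pth.
  rewrite all_cat /= wW; apply/andP; split; apply/allP => x.
    by move=> /(allP midW) /W'W.
  by move=> /(allP midbW) /W'W.
- by rewrite vdisjointC vdisjoint_catl prefix_vdisjoint_link // vdisjointC.
Qed.

End Reroute.

Section Contraction.
Variables (e : rel T) (s w : T).
Hypotheses (sS : s \in S) (wW : w \in W) (esw : e s w).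
Local Notation W' := (W :\ w).

(* Contraction of the edge [s w] onto [s]; [w] is only removed from [W]. *)
Definition contract_rel : rel T := fun x y => e x y || (x == s) && e w y.

Lemma contract_sub : subrel e contract_rel.
Proof. by move=> x y exy; rewrite /contract_rel exy. Qed.

Lemma contract_link_lift p : link contract_rel S W' M p ->
  exists2 p', link e S W M p' & forall x, x \in p' -> x \in p \/ (x = w /\ s \in p).
Proof.
move=> [s0 [mid [m [-> [s0S mM midW pth]]]]].
have midW2 : all (fun x => x \in W) mid by apply: sub_all midW => x /(subsetP (subD1set W w)).
have ns : all (predC1 s) (rcons mid m).
  rewrite all_rcons /= (contraTneq _ mM) => [|->]; last by rewrite (disjointFr dSM sS).
  by apply: sub_all midW2 => x /=; apply: contraTneq => ->; rewrite (disjointFr dSW sS).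
case Et: (rcons mid m) pth ns => [|y t]; first by case: (mid) Et.
move=> /= /andP [e0 pt] /andP [ys tns].
have {}pt : path e y t.
  apply: (sub_in_path (P := predC1 s)) pt; last by rewrite /= ys.
  by move=> a b /= ans _; rewrite /contract_rel (negbTE ans) orbF.
case/orP: e0 => [e0|/andP [/eqP Es0 ewy]].
  exists [:: s0, y & t]; last by move=> x; left.
  by exists s0, mid, m; split; rewrite -?Et //; split; rewrite // Et /= e0.
exists [:: s, w, y & t].
  exists s, (w :: mid), m; split; first by rewrite /= Et.
  by split; rewrite //= ?wW ?esw ?Et //= ewy.
move=> x; rewrite !inE -Es0 => /or3P [/eqP ->|/eqP ->|xt].
- by left; rewrite eqxx.
- by right; rewrite eqxx.
- by left; rewrite xt !orbT.
Qed.

Lemma contract_two_links p q :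
  link contract_rel S W' M p -> link contract_rel S W' M q -> vdisjoint p q ->
  exists p' q', [/\ link e S W M p', link e S W M q' & vdisjoint p' q'].
Proof.
move=> lp lq /vdisjointP pq.
have [p' lp' p'p] := contract_link_lift lp; have [q' lq' q'q] := contract_link_lift lq.
have wS : w \notin S by rewrite (disjointFl dSW wW).
have wW' : w \notin W' by rewrite !inE eqxx.
have wM : w \notin M by rewrite (disjointFr dWM wW).
have wp := link_notin wS wW' wM lp; have wq := link_notin wS wW' wM lq.
exists p', q'; split => //; apply/vdisjointP => x /p'p xp; apply/negP => /q'q xq.
case: xp xq => [xp|[xw sp]] [xq|[xw' sq]].
- by case/negP: (pq x xp).
- by rewrite -xw' xp in wp.
- by rewrite -xw xq in wq.
- by case/negP: (pq s sp).
Qed.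

Lemma contract_link_from_w q :
  link e [set w] W' M (w :: q) -> link contract_rel S W' M (s :: q).
Proof.
case=> w0 [mid [m [[<- ->] [_ mM midW pth]]]]; exists s, mid, m; split => //; split => //.
case: (rcons mid m) pth => //= y t /andP [ewy pt].
by rewrite /contract_rel eqxx ewy orbT (sub_path contract_sub pt).
Qed.

Lemma contract_cut X : s \notin X ->
  (forall p, link contract_rel S W' M p -> has (fun v => v \in X) p) ->
  forall p, link e S W M p -> has (fun v => v \in X) p.
Proof.
move=> sX cut p /(link_avoid_or_after wW) [lp|[q lq qp]].
  exact/cut/(link_sub contract_sub (subxx _) (subxx _) (subxx _) lp).
have /hasP [z] := cut _ (contract_link_from_w lq).
rewrite inE => /predU1P [->|zq zX]; first by rewrite (negbTE sX).
by apply/hasP; exists z => //; apply: qp; rewrite inE zq orbT.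
Qed.

Lemma pair_cut_links X : (forall p, link contract_rel S W' M p -> s \in p) ->
  (forall p, link e [set s; w] W' M p -> has (fun v => v \in X) p) ->
  forall p, link e S W M p -> has (fun v => v \in X) p.
Proof.
move=> s_on_links cut p /(link_avoid_or_after wW) [lp|[q lq qp]].
  have sp := s_on_links _ (link_sub contract_sub (subxx _) (subxx _) (subxx _) lp).
  have lpW := link_sub (fun _ _ => id) (subxx _) (subD1set W w) (subxx _) lp.
  have := link_head_S lpW sp sS; case: lp => s0 [mid [m [-> [_ mM midW pth]]]] Es0.
  by apply: cut; exists s0, mid, m; split => //; split; rewrite // -Es0 !inE eqxx.
have sub_sw : [set w] \subset [set s; w] by rewrite sub1set !inE eqxx orbT.
have /hasP [z zq zX] := cut _ (link_sub (fun _ _ => id) sub_sw (subxx _) (subxx _) lq).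
by apply/hasP; exists z => //; apply: qp.
Qed.

(* A cut vertex of the contracted instance other than [s] cuts the links of [e].
   If it is [s], either [s] cuts them, or some link [R] avoids [s] and two
   disjoint links from [s] and [w] can be rerouted along [R]. *)
Lemma two_links_or_cut_contract :
  two_links_or_cut contract_rel S W' M -> two_links_or_cut e [set s; w] W' M ->
  two_links_or_cut e S W M.
Proof.
case=> [[p [q [lp lq pq]]]|[X [X1 cutX]]] pair_links.
  by left; apply: contract_two_links lp lq pq.
have [sX|sX] := boolP (s \in X); last by right; exists X; split => //; apply: contract_cut.
have s_on_links p : link contract_rel S W' M p -> s \in p.
  by move=> /cutX /hasP [z zp zX]; rewrite -(card_le1_eqP X1 s z sX zX).
have s_on_elinks p : link e S W' M p -> s \in p.
  by move=> lp; apply/s_on_links/(link_sub contract_sub (subxx _) (subxx _) (subxx _) lp).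
have [?|[R lR sR]] := cut_vertex_or_avoiding e S W M s; first done.
case: pair_links => [[p [q [lp lq pq]]]|[X' [X'1 cutX']]]; last first.
  by right; exists X'; split => //; apply: pair_cut_links.
left; case: (links_from_pair lp lq pq) => [[ps qw]|[qs pw]].
  exact: (reroute_links sS wW s_on_elinks lR sR ps qw pq).
by rewrite vdisjointC in pq; exact: (reroute_links sS wW s_on_elinks lR sR qs pw pq).
Qed.

End Contraction.
End Disjoint.

Lemma two_links_or_cut_menger e S W M :
  [disjoint S & W] -> [disjoint S & M] -> [disjoint W & M] -> two_links_or_cut e S W M.
Proof.
have [n] := ubnP #|W|; elim: n => // n IH in e S W M * => ltWn dSW dSM dWM.
have [[s [w [sS wW esw]]]|noSW] := classic (exists s w, [/\ s \in S, w \in W & e s w]); last first.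
  by apply: two_links_or_cut_direct => // s w sS wW; apply/negP => esw; apply: noSW; exists s, w.
have ltW'n : #|W :\ w| < n by move: ltWn; rewrite (cardsD1 w W) wW.
have dW'M : [disjoint W :\ w & M] by apply: disjointWl dWM; apply: subD1set.
apply: (two_links_or_cut_contract dSW dSM dWM sS wW esw); apply: IH => //.
- by apply: disjointWr dSW; apply: subD1set.
- apply/disjoint_setP => x /set2P [] ->; rewrite !inE negb_and.
    by rewrite (disjointFr dSW sS) orbT.
  by rewrite eqxx.
- by apply/disjoint_setP => x /set2P [] ->; rewrite ?(disjointFr dSM sS) ?(disjointFr dWM wW).
Qed.

End TwoLinks.

Section APaths.
Variables (T : finType) (e : rel T) (A : {set T}) (l : nat).

Lemma A_path_rcons x q z : A_path e A (x :: rcons q z) =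
  [&& path e x (rcons q z), uniq (x :: rcons q z), x \in A, z \in A
    & all (fun v => v \notin A) q].
Proof. by rewrite /A_path size_rcons last_rcons belast_rcons. Qed.

Lemma A_path_shape p : A_path e A p -> exists x q z, p = x :: rcons q z.
Proof. by case: p => // x q; case/lastP: q => // q z _; exists x, q, z. Qed.

Lemma A_path_rev p : symmetric e -> A_path e A p -> A_path e A (rev p).
Proof.
move=> esym Ap; have [x [q [z Ep]]] := A_path_shape Ap; move: Ap.
rewrite Ep rev_cons rev_rcons rcons_cons !A_path_rcons all_rev.
case/and5P => pth un xA zA qA; rewrite xA zA qA !andbT; apply/andP; split.
  have := rev_path e x (rcons q z); rewrite last_rcons belast_rcons rev_cons => ->.
  by rewrite (eq_path (e' := e)) // => a b; apply: esym.
by rewrite -rev_cons -rev_rcons rev_uniq.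
Qed.

Lemma A_path_memA x q z y : A_path e A (x :: rcons q z) ->
  y \in x :: rcons q z -> y \in A -> (y == x) || (y == z).
Proof.
rewrite A_path_rcons => /and5P [_ _ _ _ qA]; rewrite inE mem_rcons inE.
by case/or3P => [->|->|/(allP qA) /negbTE ->]; rewrite ?orbT.
Qed.

Lemma long_A_path_graft a mid x q1 v q2 z :
  A_path e A (x :: rcons (q1 ++ v :: q2) z) -> l <= (size q2).+1 ->
  a \in A -> all (fun u => u \notin A) mid -> uniq (a :: mid) ->
  vdisjoint (a :: mid) (x :: rcons (q1 ++ v :: q2) z) -> path e a (rcons mid v) ->
  long_A_path e A l ((a :: mid) ++ v :: rcons q2 z).
Proof.
rewrite A_path_rcons rcons_cat -cat_cons => /and5P [pth un xA zA qA] lq2 aA midA amid dis pa.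
rewrite vdisjoint_catr in dis; case/andP: dis => _ dv.
move: qA; rewrite all_cat /= => /and3P [_ vA q2A].
have pv : path e v (rcons q2 z) by move: pth; rewrite cat_path => /andP [_] /= /andP [_].
have uv : uniq (v :: rcons q2 z) by move: un; rewrite cat_uniq => /and3P [_ _ ->].
have -> : a :: mid ++ v :: rcons q2 z = a :: rcons (mid ++ v :: q2) z by rewrite rcons_cat.
apply/andP; split; last by rewrite /path_length /= size_rcons size_cat /=; lia.
rewrite A_path_rcons aA zA all_cat midA /= vA q2A rcons_cat rcons_cons !andbT.
apply/andP; split; first by rewrite -cat_rcons cat_path last_rcons pa pv.
change (uniq ((a :: mid) ++ v :: rcons q2 z)).
by rewrite cat_uniq amid uv andbT; rewrite vdisjointC in dv.
Qed.

Lemma A_path_prefix_link (U M : {set T}) x q1 y q2 z :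
  A_path e A (x :: rcons (q1 ++ y :: q2) z) -> ~~ has (fun v => v \in U) (x :: q1) ->
  y \in M -> link e (A :\: U) (~: (A :|: U)) M (x :: rcons q1 y).
Proof.
rewrite A_path_rcons all_cat rcons_cat cat_path => /and5P [/andP [pq1 /andP [ey _]] _ xA _].
case/andP=> q1A _ /norP [xU q1U] yM; exists x, q1, y; split => //; split => //.
- by rewrite inE xU.
- apply/allP => v vq1; rewrite !inE negb_or (allP q1A v vq1) /=.
  by apply: contra q1U => vU; apply/hasP; exists v.
- by rewrite rcons_path pq1 ey.
Qed.

End APaths.

(** * Families of disjoint long A-paths *)

Section LongAPathFamilies.
Variables (T : finType) (e : rel T) (A : {set T}) (l : nat).
Hypotheses (esym : symmetric e) (l_gt0 : 0 < l).
Implicit Types (P Q R : seq T) (G : seq (seq T)).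

Local Notation long := (long_A_path e A l).

Lemma long_A_path_rev P : long P -> long (rev P).
Proof. by case/andP => Ap lP; rewrite /long_A_path A_path_rev // /path_length size_rev. Qed.

Definition path_ends P : {set T} := [set x in take l P] :|: [set x in take l (rev P)].

Definition path_middle P : {set T} := [set x in P] :\: path_ends P.

Lemma card_path_ends P : #|path_ends P| <= 2 * l.
Proof.
rewrite mul2n -addnn (leq_trans (leq_card_setU _ _).1) // leq_add // cardsE.
  by rewrite (leq_trans (card_size _)) // size_take_min geq_minl.
by rewrite (leq_trans (card_size _)) // size_take_min geq_minl.
Qed.

Lemma path_middle_rev P : path_middle (rev P) = path_middle P.
Proof.
by apply/setP => x; rewrite /path_middle /path_ends revK setUC !inE mem_rev.
Qed.

Lemma mem_path_ends_A P x : long P -> x \in P -> x \in A -> x \in path_ends P.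
Proof.
case/andP => Ap _; have [y [q [z EP]]] := A_path_shape Ap; rewrite EP in Ap *.
have head_take a s : a \in take l (a :: s) by case: l l_gt0 => // n _; rewrite mem_head.
move=> xP xA; rewrite !inE; case/orP: (A_path_memA Ap xP xA) => /eqP ->.
  by rewrite head_take.
by rewrite rev_cons rev_rcons rcons_cons head_take orbT.
Qed.

Lemma path_middle_prefix P s1 v s2 :
  P = s1 ++ v :: s2 -> v \in path_middle P -> l <= size s1.
Proof.
move=> -> /setDP [_]; rewrite !inE negb_or => /andP [vtake _].
rewrite leqNgt; apply: contra vtake => ls1.
rewrite take_cat ltnNge (ltnW ls1) /= mem_cat.
have [n ->] : exists n, l - size s1 = n.+1 by exists (l - size s1).-1; rewrite prednK // subn_gt0.
by rewrite inE eqxx orbT.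
Qed.

Lemma path_middle_suffix P s1 v s2 :
  P = s1 ++ v :: s2 -> v \in path_middle P -> l <= size s2.
Proof.
move=> EP; rewrite -path_middle_rev -(size_rev s2); apply: path_middle_prefix (rev s1) _.
by rewrite EP rev_cat rev_cons cat_rcons.
Qed.

Lemma long_A_path_graft_middle P a mid s1 v s2 :
  long P -> P = s1 ++ v :: s2 -> v \in path_middle P ->
  a \in A -> all (fun u => u \notin A) mid -> uniq (a :: mid) -> vdisjoint (a :: mid) P ->
  path e a (rcons mid v) -> long ((a :: mid) ++ v :: s2).
Proof.
move=> lP EP vM aA midA amid dis pa.
have ls1 := path_middle_prefix EP vM; have ls2 := path_middle_suffix EP vM.
case: s1 EP ls1 => [|x q1] EP ls1; first by rewrite leqNgt l_gt0 in ls1.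
case/lastP: s2 EP ls2 => [|q2 z] EP; first by rewrite leqNgt l_gt0.
rewrite size_rcons => lq2; case/andP: (lP) => Ap _.
have EP' : P = x :: rcons (q1 ++ v :: q2) z by rewrite EP rcons_cat.
by rewrite EP' in Ap dis; apply: long_A_path_graft Ap lq2 aA midA amid dis pa.
Qed.

Lemma long_A_path_uniq P : long P -> uniq P.
Proof. by case: P => // x q /andP [/andP [_ /andP [_ /andP [-> _]]]]. Qed.

Definition long_A_family G := all long G && pairwise (@vdisjoint T) G.

Definition family_vertices G : {set T} := [set x in flatten G].

Lemma long_A_family_cons Q G :
  long_A_family (Q :: G) = [&& long Q, all (vdisjoint Q) G & long_A_family G].
Proof. by rewrite /long_A_family /= andbACA -andbA. Qed.

Lemma long_A_family_del G1 P G2 : long_A_family (G1 ++ P :: G2) ->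
  [/\ long P, all (vdisjoint P) (G1 ++ G2) & long_A_family (G1 ++ G2)].
Proof.
rewrite /long_A_family !all_cat !pairwise_cat /= allrel_consr.
rewrite (eq_all (fun R => vdisjointC R P)).
by case/andP=> /and3P [-> -> ->] /and3P [/andP [-> ->] -> /andP [-> ->]].
Qed.

Lemma vdisjoint_flatten Q G : vdisjoint Q (flatten G) = all (vdisjoint Q) G.
Proof. by elim: G => [|R G IH]; [apply/hasPn | rewrite /= vdisjoint_catr IH]. Qed.

Lemma mem_family_vertices G R x : R \in G -> x \in R -> x \in family_vertices G.
Proof. by move=> RG xR; rewrite inE; apply/flattenP; exists R. Qed.

Section Augment.
Variables (G1 G2 : seq (seq T)) (P : seq T).
Hypothesis famG : long_A_family (G1 ++ P :: G2).
Local Notation G := (G1 ++ P :: G2).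
Local Notation U := (family_vertices G).

Lemma P_in_family : P \in G.
Proof. by rewrite mem_cat mem_head orbT. Qed.

Definition arm a mid v :=
  [/\ a \in A :\: U, all (fun x => x \in ~: (A :|: U)) mid, uniq (a :: mid),
      path e a (rcons mid v) & v \in path_middle P].

Lemma arm_of_link p : link e (A :\: U) (~: (A :|: U)) (path_middle P) p ->
  exists a mid v, arm a mid v /\ {subset a :: rcons mid v <= p}.
Proof.
move=> lp; have dSM : [disjoint A :\: U & path_middle P].
  apply/disjoint_setP => x /setDP [_ xU]; apply: contra xU => /setDP [+ _].
  by rewrite inE; apply: mem_family_vertices P_in_family.
have [a [mid [v [[aS vM midW pa un] sub]]]] := link_shorten dSM lp.
exists a, mid, v; split => //; split => //.
by move: un; rewrite /= mem_rcons inE rcons_uniq negb_or => /andP [/andP [_ ->] /andP [_ ->]].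
Qed.

Lemma arm_vdisjoint a mid v R : arm a mid v -> R \in G -> vdisjoint (a :: mid) R.
Proof.
case=> aS midW _ _ _ RG; apply/vdisjointP => x xam.
have xU : x \notin U.
  move: xam; rewrite inE => /predU1P [->|/(allP midW)]; first by case/setDP: aS.
  by rewrite !inE negb_or => /andP [].
by apply: contra xU => xR; apply: mem_family_vertices RG xR.
Qed.

Lemma arm_graft a mid v Q s1 s2 : arm a mid v -> Q = P \/ Q = rev P ->
  Q = s1 ++ v :: s2 -> long ((a :: mid) ++ v :: s2).
Proof.
move=> arm_v EQ EQs; have [aS midW amid pa vM] := arm_v.
have [lP _ _] := long_A_family_del famG.
have dP := arm_vdisjoint arm_v P_in_family.
apply: (long_A_path_graft_middle (P := Q)) EQs _ _ _ amid _ pa.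
- by case: EQ => ->; rewrite ?long_A_path_rev.
- by case: EQ => ->; rewrite ?path_middle_rev.
- by case/setDP: aS.
- by apply: sub_all midW => x; rewrite !inE negb_or => /andP [].
- by case: EQ => ->; rewrite // (vdisjoint_sub _ (fun x => _) dP) // => x; rewrite mem_rev.
Qed.

Lemma graft_vdisjoint_rest a mid v t : arm a mid v -> {subset t <= P} ->
  all (vdisjoint ((a :: mid) ++ t)) (G1 ++ G2).
Proof.
move=> arm_v tP; have [_ PG12 _] := long_A_family_del famG.
apply/allP => R RG12; rewrite vdisjoint_catl (vdisjoint_sub tP _ (allP PG12 R RG12)) // andbT.
by apply: arm_vdisjoint arm_v _; move: RG12; rewrite !mem_cat inE => /orP [] ->; rewrite ?orbT.
Qed.

Lemma augment_ordered a1 mid1 v1 a2 mid2 v2 s1 s2 s3 :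
  arm a1 mid1 v1 -> arm a2 mid2 v2 -> vdisjoint (a1 :: mid1) (a2 :: mid2) ->
  P = s1 ++ v1 :: s2 ++ v2 :: s3 ->
  exists G', long_A_family G' /\ size G' = (size G).+1.
Proof.
move=> arm1 arm2 d12 EP; have [lP _ famG12] := long_A_family_del famG.
have lQ1 : long ((a1 :: mid1) ++ v1 :: rev s1).
  apply: (arm_graft (s1 := rev (s2 ++ v2 :: s3)) arm1 (or_intror erefl)).
  by rewrite EP rev_cat rev_cons cat_rcons.
have lQ2 : long ((a2 :: mid2) ++ v2 :: s3).
  by apply: (arm_graft (s1 := s1 ++ v1 :: s2) arm2 (or_introl erefl)); rewrite EP -catA.
have sub1 : {subset v1 :: rev s1 <= s1 ++ v1 :: s2}.
  by move=> x; rewrite inE mem_rev mem_cat inE => /orP [] ->; rewrite ?orbT.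
have sub2 : {subset v2 :: s3 <= P} by move=> x x3; rewrite EP -cat_cons catA mem_cat x3 orbT.
have sub1P : {subset v1 :: rev s1 <= P} by move=> x /sub1 x1; rewrite EP -cat_cons catA mem_cat x1.
have d_tails : vdisjoint (v1 :: rev s1) (v2 :: s3).
  have uP : uniq ((s1 ++ v1 :: s2) ++ v2 :: s3).
    by rewrite -catA cat_cons -EP; apply: long_A_path_uniq.
  exact: vdisjoint_sub sub1 (fun x => id) (uniq_vdisjoint uP).
exists [:: (a1 :: mid1) ++ v1 :: rev s1, (a2 :: mid2) ++ v2 :: s3 & G1 ++ G2]; split; last first.
  by rewrite /= !size_cat /= addnS.
rewrite !long_A_family_cons lQ1 lQ2 famG12 [all _ (_ :: _)]/= (graft_vdisjoint_rest arm1 sub1P).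
rewrite (graft_vdisjoint_rest arm2 sub2) !andbT /=.
rewrite -!cat_cons vdisjoint_catl !vdisjoint_catr d12 d_tails andTb andbT.
rewrite (vdisjoint_sub (fun x => id) sub2 (arm_vdisjoint arm1 P_in_family)) andTb.
by rewrite vdisjointC (vdisjoint_sub (fun x => id) sub1P (arm_vdisjoint arm2 P_in_family)).
Qed.

Lemma augment_family p q :
  link e (A :\: U) (~: (A :|: U)) (path_middle P) p ->
  link e (A :\: U) (~: (A :|: U)) (path_middle P) q -> vdisjoint p q ->
  exists G', long_A_family G' /\ size G' = (size G).+1.
Proof.
move=> /arm_of_link [a1 [mid1 [v1 [arm1 sub1]]]] /arm_of_link [a2 [mid2 [v2 [arm2 sub2]]]] dpq.
have sub_arm a mid x : x \in a :: mid -> forall v, x \in a :: rcons mid v.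
  by move=> + v; rewrite !inE mem_rcons inE => /orP [] ->; rewrite ?orbT.
have d12 : vdisjoint (a1 :: mid1) (a2 :: mid2).
  by apply: vdisjoint_sub dpq => x /sub_arm xa; [apply: sub1 (xa v1) | apply: sub2 (xa v2)].
have v1p : v1 \in p by apply: sub1; rewrite inE mem_rcons mem_head orbT.
have v2q : v2 \in q by apply: sub2; rewrite inE mem_rcons mem_head orbT.
have v12 : v1 != v2 by apply: contraTneq v2q => <-; move/vdisjointP: dpq; apply.
have [[_ _ _ _ /setDP [+ _]] [_ _ _ _ /setDP [+ _]]] := (arm1, arm2); rewrite !inE => v1P v2P.
have [s1 [s2 [s3 [EP|EP]]]] := split_two v12 v1P v2P.
  exact: augment_ordered arm1 arm2 d12 EP.
by rewrite vdisjointC in d12; exact: augment_ordered arm2 arm1 d12 EP.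
Qed.

End Augment.

Definition guards G P (Y : {set T}) :=
  path_ends P \subset Y /\
  forall p, link e (A :\: family_vertices G) (~: (A :|: family_vertices G)) (path_middle P) p ->
    has (fun v => v \in Y) p.

Lemma guardsS G P (Y Y' : {set T}) : Y \subset Y' -> guards G P Y -> guards G P Y'.
Proof.
move=> /subsetP YY' [/subsetP ends cut]; split; first by apply/subsetP => x /ends /YY'.
by move=> p /cut /hasP [x xp /YY' xY']; apply/hasP; exists x.
Qed.

Lemma augment_or_guard G P : long_A_family G -> P \in G ->
  (exists G', long_A_family G' /\ size G' = (size G).+1) \/
  exists2 Y : {set T}, #|Y| <= (2 * l).+1 & guards G P Y.
Proof.
move=> famG PG; set U := family_vertices G.
have PU x : x \in path_middle P -> x \in U.
  by case/setDP; rewrite inE => xP _; apply: mem_family_vertices PG xP.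
have dSW : [disjoint A :\: U & ~: (A :|: U)].
  by apply/disjoint_setP => x /setDP [xA _]; rewrite !inE xA.
have dSM : [disjoint A :\: U & path_middle P].
  by apply/disjoint_setP => x /setDP [_]; apply: contra (PU x).
have dWM : [disjoint ~: (A :|: U) & path_middle P].
  by apply/disjoint_setP => x; rewrite in_setC in_setU negb_or => /andP [_]; apply: contra (PU x).
case: (two_links_or_cut_menger e dSW dSM dWM) => [[p [q [lp lq dpq]]]|[X [cardX cutX]]].
  left; move: famG lp lq; rewrite /U; case/splitPr: PG => G1 G2 famG lp lq.
  exact: (@augment_family G1 G2 P famG p q lp lq dpq).
right; exists (path_ends P :|: X); last by split=> [|p /cutX /hasP [x xp xX]];
  [apply: subsetUl | apply/hasP; exists x; rewrite // inE xX orbT].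
by rewrite (leq_trans (leq_card_setU _ _).1) // -addn1 leq_add // card_path_ends.
Qed.

Lemma guarded_family_avoided G X Q : long_A_family G ->
  (forall P, P \in G -> guards G P X) -> long Q -> ~~ has (fun v => v \in X) Q ->
  vdisjoint Q (flatten G).
Proof.
move=> /andP [/allP lG _] guard lQ QX.
have QX' y : y \in Q -> y \notin X by move=> yQ; apply: contra QX => yX; apply/hasP; exists y.
have ends_U y : y \in Q -> y \in A -> y \notin flatten G.
  move=> yQ yA; apply/flattenP => [[P PG yP]]; have [/subsetP endsX _] := guard P PG.
  by case/negP: (QX' y yQ); apply: endsX; apply: mem_path_ends_A (lG P PG) yP yA.
case/andP: (lQ) => AQ _; have [x [q [z EQ]]] := A_path_shape AQ; subst Q.
have xQ : x \in x :: rcons q z by rewrite mem_head.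
have zQ : z \in x :: rcons q z by rewrite inE mem_rcons mem_head orbT.
have := AQ; rewrite A_path_rcons => /and5P [_ _ xA zA _].
have qU : ~~ has (fun v => v \in flatten G) q.
  apply/negP => /split_first [q1 [y [q2 [Eq yU q1U]]]]; have [P PG yP] := flattenP yU.
  have yQ : y \in x :: rcons q z by rewrite Eq !(inE, mem_rcons, mem_cat) eqxx !orbT.
  have [/subsetP endsX cut] := guard P PG.
  have yM : y \in path_middle P.
    by rewrite in_setD in_set yP andbT; apply: contra (QX' y yQ); apply: endsX.
  have preU : ~~ has (fun v => v \in family_vertices G) (x :: q1).
    rewrite /= negb_or in_set ends_U //= (eq_has (a2 := fun v => v \in flatten G)) //.
    by move=> v; rewrite /= in_set.
  rewrite Eq in AQ; have /hasP [v vpre vX] := cut _ (A_path_prefix_link AQ preU yM).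
  have vQ : v \in x :: rcons q z.
    by move: vpre; rewrite Eq !(inE, mem_rcons, mem_cat) => /or3P [] ->; rewrite ?orbT.
  by move: (QX' v vQ); rewrite vX.
apply/vdisjointP => v; rewrite inE mem_rcons inE => /or3P [/eqP ->|/eqP ->|vq].
- exact: ends_U.
- exact: ends_U.
- by apply: contra qU => vU; apply/hasP; exists v.
Qed.

Lemma augment_or_cover G : long_A_family G ->
  (exists G', long_A_family G' /\ size G' = (size G).+1) \/
  exists2 X : {set T}, #|X| <= (2 * l).+1 * size G &
    forall Q, long Q -> has (fun v => v \in X) Q.
Proof.
move=> famG.
have [ext|[X cardX guardX]] := union_witnesses (@guardsS G) (fun P => augment_or_guard famG);
  first by left.
have [[Q [lQ QX]]|cover] := classic (exists Q, long Q /\ ~~ has (fun v => v \in X) Q).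
  left; exists (Q :: G); split => //.
  have QG := guarded_family_avoided famG guardX lQ QX.
  by rewrite long_A_family_cons lQ famG -vdisjoint_flatten QG.
by right; exists X => // Q lQ; apply/negPn/negP => QX; apply: cover; exists Q.
Qed.

Lemma family_or_cover n :
  (exists G, long_A_family G /\ size G = n) \/
  exists2 X : {set T}, #|X| <= (2 * l).+1 * n.-1 &
    forall Q, long Q -> has (fun v => v \in X) Q.
Proof.
elim: n => [|n [[G [famG <-]]|[X cardX cover]]]; first by left; exists [::].
  by case: (augment_or_cover famG) => [?|[X ? ?]]; [left | right; exists X].
by right; exists X => //; apply: leq_trans cardX _; rewrite leq_mul2l leq_pred orbT.
Qed.

End LongAPathFamilies.

Theorem theorem6 (l : nat) (hl : 0 < l) (k : nat) (hk : 0 < k)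
    (T : finType) (e : rel T) (esym : symmetric e) (eirr : irreflexive e)
    (A : {set T}) :
  (exists P : 'I_k -> seq T,
      (forall i, long_A_path e A l (P i)) /\
      (forall i j, i != j -> vdisjoint (P i) (P j)))
  \/
  (exists X : {set T}, #|X| <= 4 * k * l /\
      forall p : seq T, long_A_path e A l p -> has (fun v => v \in X) p).
Proof.
have [[G [/andP [/allP longG /(pairwiseP [::]) disjG] sizeG]]|[X cardX cover]] :=
  family_or_cover A esym hl k.
  left; exists (fun i => nth [::] G i); split=> [i|i j].
    by apply/longG/mem_nth; rewrite sizeG.
  have ltG (m : 'I_k) : (m : nat) \in gtn (size G) by rewrite -topredE /= sizeG.
  move=> nij; case: (ltngtP i j) => [ij|ji|/val_inj eij]; first exact: disjG.
    by rewrite vdisjointC; apply: disjG.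
  by rewrite eij eqxx in nij.
right; exists X; split => //; apply: leq_trans cardX _.
nia.
Qed.
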